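(* Let $A\in\mathbb{R}^{n\times m}$ with $n<m$ have nonzero columns $\alpha_1,\dots,\alpha_m$, let $c_{ij}=\langle\alpha_i,\alpha_j\rangle$ and $\nu(i)=\max_{j\neq i}\frac{|c_{ij}|}{c_{ii}}$. Then every $x\in\mathbb{R}^m$ with $$\|x\|_0\le\frac{1}{2\max_i\nu(i)}\Big(\min_{i\neq j}\frac{c_{ii}}{c_{jj}}-\frac12\Big)$$ is the unique minimizer of $\min_{z\in\mathbb{R}^m}\|z\|_1$ subject to $Az=Ax$; that is, the sparsity level satisfies $SL\ge\frac{1}{2\max_i\nu(i)}\big(\min_{i\neq j}\frac{c_{ii}}{c_{jj}}-\frac12\big)$.
   Context: $[m]=\{1,\dots,m\}$; $\|x\|_0$ is the number of nonzero entries of $x$; the maximum over $i$ and minimum over $i\neq j$ range over $[m]$. The sparsity level $SL$ of $A$ is the largest integer $s$ such that every $x$ with $\|x\|_0\le s$ is uniquely recovered as the minimizer of $\min\|z\|_1$ s.t. $Az=Ax$. *)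

From HB Require Import structures.
From mathcomp Require Import all_boot all_order all_algebra.
From mathcomp Require Export reals.
Set Implicit Arguments. Unset Strict Implicit. Unset Printing Implicit Defensive.
Import Order.TTheory GRing.Theory Num.Theory.
Local Open Scope ring_scope.

Definition gram (R : realType) (n m : nat) (A : 'M[R]_(n, m)) (i j : 'I_m) : R :=
  \sum_(k < n) A k i * A k j.

(* nu(i) = max_{j <> i} |c_ij| / c_ii  (values are >= 0, so 0 is a harmless
   default for the max). *)
Definition nu (R : realType) (n m : nat) (A : 'M[R]_(n, m)) (i : 'I_m) : R :=
  \big[Num.max/0]_(j < m | j != i) (`|gram A i j| / gram A i i).

Definition max_nu (R : realType) (n m : nat) (A : 'M[R]_(n, m)) : R :=
  \big[Num.max/0]_(i < m) nu A i.

(* min_{i <> j} c_ii / c_jj ; the default 1 is harmless: the minimum over a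
   nonempty range is always <= 1 since both c_ii/c_jj and c_jj/c_ii occur. *)
Definition min_ratio (R : realType) (n m : nat) (A : 'M[R]_(n, m)) : R :=
  \big[Num.min/1]_(i < m) \big[Num.min/1]_(j < m | j != i)
     (gram A i i / gram A j j).

Definition norm0 (R : realType) (m : nat) (x : 'cV[R]_m) : nat :=
  #|[set i : 'I_m | x i 0 != 0]|.

Definition norm1 (R : realType) (m : nat) (x : 'cV[R]_m) : R :=
  \sum_(i < m) `|x i 0|.

Definition unique_l1_minimizer (R : realType) (n m : nat) (A : 'M[R]_(n, m))
  (x : 'cV[R]_m) : Prop :=
  forall z : 'cV[R]_m, A *m z = A *m x -> z <> x -> norm1 x < norm1 z.

From HB Require Import structures.
From mathcomp Require Import all_boot all_order all_algebra.
From mathcomp Require Import reals.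
From mathcomp Require Import ring lra.
Set Implicit Arguments. Unset Strict Implicit. Unset Printing Implicit Defensive.
Import Order.TTheory GRing.Theory Num.Theory.
Local Open Scope ring_scope.

(* If z = x + h with A h = 0 and h <> 0, then
   ||z||_1 >= ||x||_1 + ||h||_1 - 2 sum_{i in supp x} |h_i|, so x is the unique
   minimizer as soon as the mass of every kernel vector on supp x is less than
   half its l1-norm (null space property).  For h in the kernel, row i of the
   Gram system gives c_ii h_i = - sum_{j <> i} c_ij h_j, whence
   |h_i| <= max_nu * ||h||_1.  Summing over supp x, the sparsity hypothesis
   (together with min_ratio <= 1) yields a mass of at most ||h||_1 / 4. *)

Section L1Minimizer.
Variables (R : realType) (n m : nat).
Implicit Types (A : 'M[R]_(n, m)) (x h : 'cV[R]_m).

Lemma norm1_gt0 h : h != 0 -> 0 < norm1 h.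
Proof.
move=> hN0; have [j hj | h0] := pickP (fun j => h j 0 != 0).
  rewrite -normr_gt0 in hj; rewrite /norm1 (bigD1 j) //=.
  by apply: (lt_le_trans hj); rewrite lerDl sumr_ge0.
suff h_eq0 : h = 0 by rewrite h_eq0 eqxx in hN0.
apply/matrixP => k l; rewrite mxE (ord1 l).
by move/negbFE/eqP: (h0 k).
Qed.

Lemma norm1_addr_ge x h :
  norm1 x + norm1 h - 2 * \sum_(i | x i 0 != 0) `|h i 0| <= norm1 (x + h).
Proof.
rewrite /norm1 [X in 2 * X]big_mkcond mulr_sumr -big_split -sumrB /=.
apply: ler_sum => i _; rewrite mxE.
case: eqP => [-> | _] /=; first by rewrite normr0 !add0r mulr0 subr0.
have := ler_normB (x i 0 + h i 0) (h i 0); rewrite addrK; lra.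
Qed.

Lemma null_space_unique_l1_minimizer A x :
  (forall h, A *m h = 0 -> h != 0 ->
     2 * \sum_(i | x i 0 != 0) `|h i 0| < norm1 h) ->
  unique_l1_minimizer A x.
Proof.
move=> nsp z Az zNx.
have Ah : A *m (z - x) = 0 by rewrite mulmxBr Az subrr.
have hN0 : z - x != 0 by rewrite subr_eq0; apply/eqP.
have := norm1_addr_ge x (z - x); rewrite subrKC.
have := nsp _ Ah hN0; lra.
Qed.

Lemma gram_mul_ker A h : A *m h = 0 -> forall i, \sum_j gram A i j * h j 0 = 0.
Proof.
move=> Ah i; rewrite /gram.
under eq_bigr => j _ do rewrite mulr_suml.
rewrite exchange_big /=; apply: big1 => k _.
have := congr1 (fun v : 'cV[R]_n => v k 0) Ah; rewrite !mxE => Ahk.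
transitivity (A k i * \sum_j A k j * h j 0); last by rewrite Ahk mulr0.
by rewrite mulr_sumr; apply: eq_bigr => j _; rewrite mulrA.
Qed.

Lemma gram_diag_gt0 A i : col i A != 0 -> 0 < gram A i i.
Proof.
have sq_ge0 k : 0 <= A k i * A k i by rewrite -expr2 sqr_ge0.
move=> colN0; rewrite lt_def sumr_ge0 ?andbT //.
apply: contra colN0 => /eqP/psumr_eq0P gram0; apply/eqP/matrixP => k l.
have /eqP := gram0 (fun k _ => sq_ge0 k) k isT.
by rewrite !mxE mulf_eq0 orbb => /eqP.
Qed.

Lemma nu_ge0 A i : 0 <= nu A i.
Proof. exact: bigmax_ge_id. Qed.

Lemma ler_nu A i j : j != i -> `|gram A i j| / gram A i i <= nu A i.
Proof. by move=> ji; apply: le_bigmax_cond. Qed.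

Lemma nu_le_max_nu A i : nu A i <= max_nu A.
Proof. exact: le_bigmax. Qed.

Lemma max_nu_ge0 A : (0 < m)%N -> 0 <= max_nu A.
Proof. by move=> m_gt0; apply: le_trans (nu_ge0 A (Ordinal m_gt0)) (nu_le_max_nu _ _). Qed.

Lemma min_ratio_le1 A : min_ratio A <= 1.
Proof. exact: bigmin_le_id. Qed.

Lemma ker_coord_le A h : (forall i, col i A != 0) -> A *m h = 0 ->
  forall i, `|h i 0| <= max_nu A * norm1 h.
Proof.
move=> colN0 Ah i; have c_gt0 := gram_diag_gt0 (colN0 i).
have M_ge0 : 0 <= max_nu A by apply: max_nu_ge0; apply: leq_ltn_trans (ltn_ord i).
have := gram_mul_ker Ah i; rewrite (bigD1 i) //= => row_i.
have c_h : gram A i i * h i 0 = - \sum_(j | j != i) gram A i j * h j 0.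
  by apply/eqP; rewrite -subr_eq0 opprK row_i.
rewrite -[h i 0](mulKf (lt0r_neq0 c_gt0)) c_h normrM normrN.
rewrite normfV (gtr0_norm c_gt0) ler_pdivrMl //.
apply: le_trans (ler_norm_sum _ _ _) _.
apply: (@le_trans _ _ (\sum_(j | j != i) gram A i i * max_nu A * `|h j 0|)).
  apply: ler_sum => j ji; rewrite normrM ler_wpM2r // mulrC -ler_pdivrMr //.
  exact: le_trans (ler_nu A ji) (nu_le_max_nu A i).
rewrite -mulr_sumr -mulrA ler_pM2l //; apply: ler_wpM2l => //.
by rewrite /norm1 [X in _ <= X](bigD1 i) //= lerDr.
Qed.

End L1Minimizer.

Lemma sparsity_mulr_le (R : realFieldType) (s M r : R) :
  0 <= M -> r <= 1 -> s <= (2 * M)^-1 * (r - 2^-1) -> s * M <= 4^-1.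
Proof.
move=> M_ge0 r_le1; have [-> | MN0] := eqVneq M 0; first by rewrite mulr0; lra.
move=> /(ler_wpM2r M_ge0).
have -> : (2 * M)^-1 * (r - 2^-1) * M = (r - 2^-1) / 2 by field; rewrite MN0.
lra.
Qed.

Theorem mainTheorem7 (R : realType) (n m : nat) (A : 'M[R]_(n, m))
  (Hnm : (n < m)%N) (Hcol : forall i : 'I_m, col i A != 0)
  (x : 'cV[R]_m)
  (Hx : (norm0 x)%:R <= (2 * max_nu A)^-1 * (min_ratio A - 2^-1)) :
  unique_l1_minimizer A x.
Proof.
apply: null_space_unique_l1_minimizer => h Ah hN0.
have M_ge0 : 0 <= max_nu A by apply: max_nu_ge0; apply: leq_ltn_trans Hnm.
have sM := sparsity_mulr_le M_ge0 (min_ratio_le1 A) Hx.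
have mass_le : \sum_(i | x i 0 != 0) `|h i 0| <= (norm0 x)%:R * (max_nu A * norm1 h).
  apply: le_trans (ler_sum _ (fun i _ => ker_coord_le Hcol Ah i)) _.
  by rewrite sumr_const /norm0 cardsE mulr_natl.
have N_gt0 := norm1_gt0 hN0.
have : (norm0 x)%:R * max_nu A * norm1 h <= 4^-1 * norm1 h.
  by apply: ler_wpM2r => //; apply: ltW.
rewrite -mulrA; lra.
Qed.
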